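(* Let $A$ be a set of $n$ distinct real numbers whose additive energy satisfies $E(A,A)=c|A|^2$ for some constant $c<5/2$. Then for every $a\in A$ there is an ordering $b_1,b_2,\dots,b_n$ of the elements of $A$ with $b_1=a$ such that the $n-1$ numbers $|b_2-b_1|,|b_3-b_2|,\dots,|b_n-b_{n-1}|$ are pairwise distinct.
   Context: The additive energy of a finite set $A\subset\mathbb{R}$ is $E(A,A)=|\{(x,y,z,w)\in A^4 : x+y=z+w\}|$. *)

From HB Require Import structures.
From mathcomp Require Import all_boot all_order all_algebra.
From mathcomp Require Import reals.
Set Implicit Arguments. Unset Strict Implicit. Unset Printing Implicit Defensive.
Import Order.TTheory GRing.Theory Num.Theory.
Local Open Scope ring_scope.

(* A finite set of reals is represented by a duplicate-free sequence A,
   so summing over the elements of A counts each quadruple exactly once. *)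
Definition energy (R : numDomainType) (A : seq R) : nat :=
  (\sum_(x <- A) \sum_(y <- A) \sum_(z <- A) \sum_(w <- A) nat_of_bool (x + y == z + w)%R)%N.

Definition gaps (R : numDomainType) (b1 : R) (t : seq R) : seq R :=
  pairmap (fun x y => `|y - x|) b1 t.

(* Fix the starting point a = x_k0 and encode an ordering of A starting at a by a
   permutation s of the indices with s 0 = k0; there are (n-1)! of them.  An
   ordering is bad when two of its gaps coincide, and a coincidence between the
   gaps at positions e < f is an additive relation between the at most five
   elements at positions 0, e, e+1, f, f+1, one of which is a.  Counting, for each
   pair (e, f), the permutations realising a coincidence, and mapping the relevant
   tuples injectively to nontrivial additive quadruples (three-term progressions
   and quadruples of distinct elements), bounds the number of bad orderings by
   (n-3)! times the number of nontrivial quadruples, which is at most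
   E(A,A) - (2n^2 - n) < n^2/2 + n.  For n >= 8 this is less than (n-1)!, so some
   ordering is good.  Sets of at most seven elements are treated by explicit
   orderings of the sorted set; the symmetry x |-> -x lets the start lie in the
   upper half. *)

From HB Require Import structures.
From mathcomp Require Import all_boot all_order all_algebra all_fingroup.
From mathcomp Require Import reals.
From mathcomp.algebra_tactics Require Import ring lra.
From mathcomp.zify Require Import zify.
Set Implicit Arguments. Unset Strict Implicit. Unset Printing Implicit Defensive.
Import Order.TTheory GRing.Theory Num.Theory.

Definition distinct_gap_path (R : numDomainType) (A : seq R) (a : R) : Prop :=
  exists t, perm_eq (a :: t) A /\ uniq (gaps a t).

Section GapPaths.
Local Open Scope ring_scope.
Variable R : numDomainType.
Implicit Types (A B t : seq R) (a : R).

Lemma distinct_gap_path_perm A B a :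
  perm_eq A B -> distinct_gap_path A a -> distinct_gap_path B a.
Proof. by move=> AB [t [At Ut]]; exists t; split=> //; exact: perm_trans AB. Qed.

Lemma gaps_opp a t : gaps (- a) (map -%R t) = gaps a t.
Proof. by elim: t a => //= y t IHt a; rewrite IHt -opprD normrN. Qed.

Lemma distinct_gap_path_opp A a :
  distinct_gap_path A a -> distinct_gap_path (map -%R A) (- a).
Proof.
move=> [t [At Ut]]; exists (map -%R t); split; last by rewrite gaps_opp.
by rewrite -map_cons perm_map.
Qed.

Lemma distinct_gap_path_nth (bs : seq R) (i : nat) (idx : seq nat) :
  perm_eq (i :: idx) (iota 0 (size bs)) ->
  uniq (gaps (nth 0 bs i) [seq nth 0 bs j | j <- idx]) ->
  distinct_gap_path bs (nth 0 bs i).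
Proof.
move=> idx_perm Ugaps; exists [seq nth 0 bs j | j <- idx]; split=> //.
by rewrite -map_cons -[X in perm_eq _ X](mkseq_nth 0) perm_map.
Qed.

Lemma dist_gt (x y : R) : y < x -> `|x - y| = x - y.
Proof. by move=> ?; rewrite gtr0_norm // subr_gt0. Qed.

Lemma dist_lt (x y : R) : x < y -> `|x - y| = y - x.
Proof. by move=> ?; rewrite distrC dist_gt. Qed.

End GapPaths.

Lemma fact_pred (m : nat) : (0 < m)%N -> (m`! = m * (m - 1)`!)%N.
Proof. by case: m => // m _; rewrite factS subn1. Qed.

Lemma leq_sum_nat (m k : nat) (F G : nat -> nat) :
  (forall i, (m <= i < k)%N -> (F i <= G i)%N) ->
  (\sum_(m <= i < k) F i <= \sum_(m <= i < k) G i)%N.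
Proof.
move=> FG; rewrite big_nat_cond [X in (_ <= X)%N]big_nat_cond.
by apply: leq_sum => i /andP [i_range _]; exact: FG.
Qed.

(* Pairs e < f of positions split into (0, 1), (0, f) with f >= 2, (e, e + 1) with
   e >= 1, and the remaining pairs, of which there are 'C(N - 2, 2). *)
Lemma sum_lt_pairs_le (N : nat) (c : nat -> nat -> nat) (bA bB bC bD : nat) :
  (2 <= N)%N ->
  (c 0 1 <= bA)%N ->
  (forall f, 2 <= f -> f < N -> c 0 f <= bB)%N ->
  (forall e, 1 <= e -> e.+2 <= N -> c e e.+1 <= bC)%N ->
  (forall e f, 1 <= e -> e.+2 <= f -> f < N -> c e f <= bD)%N ->
  (\sum_(0 <= f < N) \sum_(0 <= e < f) c e f
     <= bA + (N - 2) * (bB + bC) + 'C(N - 2, 2) * bD)%N.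
Proof.
case: N => [|[|N]] // _ cA cB cC cD.
rewrite big_nat_recl // big_nat_recl // big_geq // big_nat1 add0n subn2 /=.
rewrite -addnA; apply: leq_add cA _.
have -> : (N * (bB + bC) + 'C(N, 2) * bD = \sum_(0 <= i < N) ((bB + bC) + i * bD))%N.
  by rewrite big_split /= sum_nat_const_nat subn0 -bin2_sum big_distrl.
apply: leq_sum_nat => f /andP [_ f_lt].
rewrite big_nat_recl // big_nat_recr //=.
have cB' : (c 0 f.+2 <= bB)%N by apply: cB => //; lia.
have cC' : (c f.+1 f.+2 <= bC)%N by apply: cC => //; lia.
have cD' : (\sum_(0 <= i < f) c i.+1 f.+2 <= f * bD)%N.
  rewrite -[X in (_ <= X * _)%N](subn0 f) -sum_nat_const_nat.
  by apply: leq_sum_nat => e /andP [_ e_lt]; apply: cD; lia.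
move: cB' cC' cD'; set S := \sum_(_ <= _ < _) _; set P := f * bD; lia.
Qed.

Section PermutationsExtending.
Variable n : nat.
Local Open Scope group_scope.

Lemma card_perm_map_eq (ps v : seq 'I_n) :
  uniq ps -> #|[set s : 'S_n | map s ps == v]| <= (n - size ps)`!.
Proof.
move=> Ups; set S := [set s : 'S_n | _].
have [->|[s0 s0S]] := set_0Vmem S; first by rewrite cards0.
have inj : {in S &, injective (fun s : 'S_n => s * s0^-1)} by move=> x y _ _ /mulIg.
rewrite -(card_in_imset inj).
have -> : (n - size ps)`! = #|perm_on (~: [set x in ps])|.
  by rewrite card_perm cardsCs setCK card_ord cardsE (card_uniqP Ups).
apply: subset_leq_card; apply/subsetP => u /imsetP [s sS ->].
apply/subsetP => x; rewrite inE => moved; rewrite !inE; apply: contra moved => x_ps.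
move: sS s0S; rewrite !inE => /eqP s_ps /eqP s0_ps.
have : s x = s0 x.
  rewrite -(nth_index x x_ps); have i_lt : index x ps < size ps by rewrite index_mem.
  by rewrite -!(nth_map x x) // s_ps s0_ps.
by rewrite permM => ->; rewrite -permM mulgV perm1.
Qed.

Lemma card_perm_map_pred (ps : seq 'I_n) (P : pred (seq 'I_n)) : uniq ps ->
  #|[set s : 'S_n | P (map s ps)]| <=
  #|[set v : (size ps).-tuple 'I_n | P v && uniq v]| * (n - size ps)`!.
Proof.
move=> Ups; set T := [set v : (size ps).-tuple 'I_n | P v && uniq v].
apply: (@leq_trans (\sum_(s : 'S_n) \sum_(v in T) (map s ps == v :> seq _))).
  rewrite -sum1_card big_mkcond /=; apply: leq_sum => s _; rewrite inE.
  case: ifP => // Ps; set v0 : (size ps).-tuple 'I_n := map_tuple s (in_tuple ps).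
  have v0T : v0 \in T by rewrite inE Ps /= (map_inj_uniq (@perm_inj _ s)) Ups.
  by rewrite (bigD1 v0) //= eqxx.
rewrite exchange_big /= -sum_nat_const; apply: leq_sum => v _.
apply: leq_trans (card_perm_map_eq v Ups).
rewrite -sum1_card [X in _ <= X]big_mkcond /=; apply: leq_sum => s _.
by rewrite inE; case: (_ == _).
Qed.

Lemma card_perm_fix0 (i : 'I_n.+1) : n`! <= #|[set s : 'S_n.+1 | s ord0 == i]|.
Proof.
have inj : injective (fun u : 'S_n.+1 => u * tperm ord0 i) by move=> x y /mulIg.
have -> : n`! = #|perm_on [set~ (ord0 : 'I_n.+1)]| by rewrite card_perm cardsC1 card_ord.
rewrite -[X in X <= _](card_imset _ inj); apply: subset_leq_card; apply/subsetP => s.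
case/imsetP => u u_on ->; rewrite inE permM.
have -> : u ord0 = ord0.
  by apply/eqP; apply: contraT => u0; have := subsetP u_on ord0; rewrite !inE eqxx; apply.
by rewrite tpermL.
Qed.

End PermutationsExtending.

(** * Sets with more than seven elements *)

Section LargeSets.
Variable R : realDomainType.
Variables (A : seq R) (N : nat).
Hypothesis uniq_A : uniq A.
Hypothesis size_A : size A = N.+1.
Variable k0 : 'I_N.+1.
Local Notation n := N.+1.

Definition elt (i : 'I_n) : R := nth 0%R A i.

Lemma elt_inj : injective elt.
Proof. by move=> i j /eqP; rewrite /elt nth_uniq ?size_A // => /eqP /val_inj. Qed.

(* A permutation [s] of the indices encodes the ordering [elt (s 0)], ..., [elt (s N)]. *)
Definition perm_gap (s : 'S_n) (e : nat) : R :=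
  `|elt (s (inord e.+1)) - elt (s (inord e))|%R.

Lemma inord0 : (inord 0 : 'I_n) = ord0.
Proof. exact: (inord_val ord0). Qed.

Lemma perm_eq_ordering (s : 'S_n) : perm_eq [seq elt (s (inord i)) | i <- iota 0 n] A.
Proof.
rewrite -val_enum_ord -map_comp (eq_map (g := elt \o s)); last by move=> i /=; rewrite inord_val.
have -> : A = map elt (enum 'I_n).
  rewrite (eq_map (g := nth 0%R A \o val)) // map_comp val_enum_ord -size_A.
  exact: esym (mkseq_nth 0%R A).
rewrite map_comp; apply: perm_map; apply: uniq_perm;
  rewrite ?enum_uniq ?(map_inj_uniq (@perm_inj _ s)) ?enum_uniq //.
move=> x; rewrite mem_enum inE; apply/mapP; exists ((s^-1)%g x); first by rewrite mem_enum.
by rewrite permKV.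
Qed.

Lemma distinct_gap_path_of_perm (s : 'S_n) : s ord0 = k0 ->
  (forall e f : nat, e < f -> f < N -> perm_gap s e != perm_gap s f) ->
  distinct_gap_path A (elt k0).
Proof.
move=> s0 gaps_neq; set t := [seq elt (s (inord i)) | i <- iota 1 N].
have nth_path i : i <= N -> nth 0%R (elt k0 :: t) i = elt (s (inord i)).
  case: i => [|i] i_le /=; first by rewrite inord0 s0.
  by rewrite (nth_map 0) ?size_iota // nth_iota.
have nth_t i : i < N -> nth 0%R t i = elt (s (inord i.+1)).
  by move=> i_lt; rewrite -(nth_path i.+1).
exists t; split; first by have := perm_eq_ordering s; rewrite /= inord0 s0.
apply/(uniqP 0%R) => i j; rewrite !inE size_pairmap size_map size_iota => i_lt j_lt.
rewrite !(nth_pairmap 0%R) ?size_map ?size_iota // !nth_t //.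
rewrite !nth_path ?(ltnW i_lt) ?(ltnW j_lt) // => gaps_eq.
apply/eqP; rewrite eqn_leq; case: (ltngtP i j) => // ij.
- by move: (gaps_neq _ _ ij j_lt); rewrite /perm_gap gaps_eq eqxx.
- by move: (gaps_neq _ _ ij i_lt); rewrite /perm_gap gaps_eq eqxx.
Qed.

Definition entry (v : seq 'I_n) i := nth ord0 v i.
Arguments entry : simpl never.

Definition gap_match (i1 j1 i2 j2 : nat) (sg : bool) (v : seq 'I_n) :=
  (entry v 0 == k0) && (elt (entry v j1) - elt (entry v i1) ==
     (if sg then elt (entry v j2) - elt (entry v i2)
      else elt (entry v i2) - elt (entry v j2)))%R.

Definition gap_matches k i1 j1 i2 j2 sg :=
  [set v : k.-tuple 'I_n | gap_match i1 j1 i2 j2 sg v && uniq v].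

Definition equal_gaps_count (e f : nat) :=
  #|[set s : 'S_n | (s ord0 == k0) && (perm_gap s e == perm_gap s f)]|.

(* [ps] lists the positions 0, e, e + 1, f, f + 1 without repetition; [i1], [j1],
   [i2], [j2] locate e, e + 1, f, f + 1 in it. *)
Lemma equal_gaps_count_le (ps : seq 'I_n) e f i1 j1 i2 j2 : uniq ps ->
  nth ord0 ps 0 = ord0 -> nth ord0 ps i1 = inord e -> nth ord0 ps j1 = inord e.+1 ->
  nth ord0 ps i2 = inord f -> nth ord0 ps j2 = inord f.+1 ->
  i1 < size ps -> j1 < size ps -> i2 < size ps -> j2 < size ps ->
  equal_gaps_count e f <=
    (#|gap_matches (size ps) i1 j1 i2 j2 true| + #|gap_matches (size ps) i1 j1 i2 j2 false|)
    * (n - size ps)`!.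
Proof.
move=> Ups ps0 psi1 psj1 psi2 psj2 i1_lt j1_lt i2_lt j2_lt; rewrite mulnDl.
apply: leq_trans (leq_add (card_perm_map_pred (gap_match i1 j1 i2 j2 true) Ups)
                          (card_perm_map_pred (gap_match i1 j1 i2 j2 false) Ups)).
apply: leq_trans (leq_card_setU _ _).
apply: subset_leq_card; apply/subsetP => s; rewrite !inE => /andP [/eqP s0 gaps_eq].
have entry_map i : (i < size ps) -> entry (map s ps) i = s (nth ord0 ps i).
  by move=> i_lt; rewrite /entry (nth_map ord0).
have ps_gt0 : (0 < size ps) by case: (ps) i1_lt.
rewrite /gap_match !entry_map // ps0 s0 psi1 psj1 psi2 psj2 eqxx /=.
move: gaps_eq; rewrite /perm_gap eqr_norm2 opprB.
by case/orP => ->; rewrite ?orbT.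
Qed.

Lemma uniq_inord (l : seq nat) : all (fun i => i <= N) l -> uniq l ->
  uniq [seq (inord i : 'I_n) | i <- l].
Proof.
move=> /allP l_le Ul; rewrite map_inj_in_uniq // => i j i_l j_l ij.
by rewrite -(inordK (l_le i i_l)) -(inordK (l_le j j_l)) ij.
Qed.

Lemma equal_gaps_count01 : 2 <= N ->
  equal_gaps_count 0 1 <=
    (#|gap_matches 3 0 1 1 2 true| + #|gap_matches 3 0 1 1 2 false|) * (N - 2)`!.
Proof.
move=> N_ge2; have U : uniq [seq (inord i : 'I_n) | i <- [:: 0; 1; 2]].
  by apply: uniq_inord => /=; rewrite ?inE; lia.
by apply: (@equal_gaps_count_le _ 0 1 0 1 1 2 U) => /=; rewrite ?inord0.
Qed.

Lemma equal_gaps_count0f f : 2 <= f -> f < N ->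
  equal_gaps_count 0 f <=
    (#|gap_matches 4 0 1 2 3 true| + #|gap_matches 4 0 1 2 3 false|) * (N - 3)`!.
Proof.
move=> f_ge2 f_lt; have U : uniq [seq (inord i : 'I_n) | i <- [:: 0; 1; f; f.+1]].
  by apply: uniq_inord => /=; rewrite ?inE; lia.
by apply: (@equal_gaps_count_le _ 0 f 0 1 2 3 U) => /=; rewrite ?inord0.
Qed.

Lemma equal_gaps_count_adjacent e : 1 <= e -> e.+2 <= N ->
  equal_gaps_count e e.+1 <=
    (#|gap_matches 4 1 2 2 3 true| + #|gap_matches 4 1 2 2 3 false|) * (N - 3)`!.
Proof.
move=> e_ge1 e_lt; have U : uniq [seq (inord i : 'I_n) | i <- [:: 0; e; e.+1; e.+2]].
  by apply: uniq_inord => /=; rewrite ?inE; lia.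
by apply: (@equal_gaps_count_le _ e e.+1 1 2 2 3 U) => /=; rewrite ?inord0.
Qed.

Lemma equal_gaps_count_apart e f : 1 <= e -> e.+2 <= f -> f < N ->
  equal_gaps_count e f <=
    (#|gap_matches 5 1 2 3 4 true| + #|gap_matches 5 1 2 3 4 false|) * (N - 4)`!.
Proof.
move=> e_ge1 ef f_lt.
have U : uniq [seq (inord i : 'I_n) | i <- [:: 0; e; e.+1; f; f.+1]].
  by apply: uniq_inord => /=; rewrite ?inE; lia.
by apply: (@equal_gaps_count_le _ e f 1 2 3 4 U) => /=; rewrite ?inord0.
Qed.

Lemma fact_le_equal_gaps_sum :
  (forall s : 'S_n, s ord0 = k0 ->
     exists e f, [/\ e < f, f < N & perm_gap s e = perm_gap s f]) ->
  N`! <= \sum_(0 <= f < N) \sum_(0 <= e < f) equal_gaps_count e f.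
Proof.
move=> all_bad; apply: leq_trans (card_perm_fix0 k0) _.
apply: (@leq_trans (\sum_(s : 'S_n) \sum_(0 <= f < N) \sum_(0 <= e < f)
          ((s ord0 == k0) && (perm_gap s e == perm_gap s f) : nat))).
  rewrite -sum1_card big_mkcond /=; apply: leq_sum => s _; rewrite inE.
  case: eqP => // s0; have [e [f [ef f_lt gaps_eq]]] := all_bad s s0.
  rewrite (bigD1_seq f) ?mem_index_iota ?iota_uniq //=.
  rewrite (bigD1_seq e) ?mem_index_iota ?iota_uniq //= gaps_eq eqxx /=.
  by rewrite -addnA leq_addr.
rewrite exchange_big /=; apply: leq_sum => f _; rewrite exchange_big /=.
apply: leq_sum => e _; rewrite /equal_gaps_count -sum1_card [X in (_ <= X)]big_mkcond /=.
by apply: leq_sum => s _; rewrite inE; case: (_ && _).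
Qed.
Definition quad := ('I_n * 'I_n * 'I_n * 'I_n)%type.
Definition qx (q : quad) := q.1.1.1.
Definition qy (q : quad) := q.1.1.2.
Definition qz (q : quad) := q.1.2.
Definition qw (q : quad) := q.2.
Definition additive (q : quad) : bool := (elt (qx q) + elt (qy q) == elt (qz q) + elt (qw q))%R.

Lemma sum_over_A (F : R -> nat) : \sum_(x <- A) F x = \sum_(i : 'I_n) F (elt i).
Proof. by rewrite (big_nth 0%R) big_mkord size_A. Qed.

Lemma energy_sum : energy A = \sum_(q : quad) additive q.
Proof.
rewrite /energy sum_over_A.
under eq_bigr => i _ do (rewrite sum_over_A; under eq_bigr => j _ do
   (rewrite sum_over_A; under eq_bigr => k _ do rewrite sum_over_A)).
by rewrite pair_big pair_big pair_big.
Qed.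

Definition diag_quad q := (qx q == qz q) && (qy q == qw q).
Definition swap_quad q := [&& qx q != qz q, qx q == qw q & qy q == qz q].
Definition ap_quad q := [&& qx q == qy q, uniq [:: qx q; qz q; qw q] & additive q].
Definition proper_quad q := uniq [:: qx q; qy q; qz q; qw q] && additive q.
Definition ap_quads_at := [set q | ap_quad q && (qz q == k0)].
Definition ap_quads_off := [set q | ap_quad q && (qz q != k0)].
Definition proper_quads_x := [set q | proper_quad q && (qx q == k0)].
Definition proper_quads_z := [set q | proper_quad q && (qz q == k0)].
Definition proper_quads_avoid := [set q | proper_quad q && (k0 \notin [:: qx q; qy q; qz q; qw q])].

Lemma card_quads_sum (P : pred quad) : #|[set q | P q]| = \sum_q P q.
Proof. by rewrite -sum1_card big_mkcond; apply: eq_bigr => q _; rewrite inE; case: (P q). Qed.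

Lemma exclusive_sum4_le (a b c d e : bool) :
  (a -> e) -> (b -> e) -> (c -> e) -> (d -> e) ->
  (a -> [&& ~~ b, ~~ c & ~~ d]) -> (b -> ~~ c && ~~ d) -> (c -> ~~ d) ->
  a + b + c + d <= e.
Proof.
case: a b c d e => [] [] [] [] [] ae be ce de a' b' c' //;
  by [have := ae isT | have := be isT | have := ce isT | have := de isT |
      have := a' isT | have := b' isT | have := c' isT].
Qed.

Lemma quad_classes_le q : diag_quad q + swap_quad q + ap_quad q + proper_quad q <= additive q.
Proof.
case: q => [[[x y] z] w].
rewrite /diag_quad /swap_quad /ap_quad /proper_quad /additive /qx /qy /qz /qw /=.
apply: exclusive_sum4_le.
- by case/andP => /eqP -> /eqP ->.
- by case/and3P => _ /eqP -> /eqP ->; rewrite addrC.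
- by case/and3P.
- by case/andP.
- by case/andP => /eqP xz /eqP yw; rewrite xz !inE !eqxx /= ?orbT /= ?andbF.
- by case/and3P => xz /eqP xw /eqP yz; rewrite xw yz !inE !eqxx /= ?orbT /= ?andbF.
- by case/and3P => /eqP xy _ _; rewrite xy !inE !eqxx /= ?orbT /= ?andbF.
Qed.

Lemma ap_quad_split q : (ap_quad q && (qz q == k0)) + (ap_quad q && (qz q != k0)) = ap_quad q.
Proof. by case: (ap_quad q); case: (qz q == k0). Qed.

Lemma exclusive_sum3_le (a b c d : bool) :
  (a -> d) -> (b -> d) -> (c -> d) -> (a -> ~~ b && ~~ c) -> (b -> ~~ c) -> a + b + c <= d.
Proof.
case: a b c d => [] [] [] [] ad bd cd a' b' //;
  by [have := ad isT | have := bd isT | have := cd isT | have := a' isT | have := b' isT].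
Qed.

Lemma proper_quad_split_le q :
  (proper_quad q && (qx q == k0)) + (proper_quad q && (qz q == k0))
    + (proper_quad q && (k0 \notin [:: qx q; qy q; qz q; qw q])) <= proper_quad q.
Proof.
rewrite /proper_quad; apply: exclusive_sum3_le; try by case/andP.
- case/andP => /andP [Uq _] /eqP xk.
  have -> : (qz q == k0) = false.
    by apply/negP => /eqP zk; move: Uq; rewrite xk zk /= !inE eqxx /= orbT.
  by rewrite -xk !inE eqxx /= !andbF.
- by case/andP => _ /eqP zk; rewrite -zk !inE eqxx /= !orbT !andbF.
Qed.
Lemma card_diag_quads : n * n <= #|[set q | diag_quad q]|.
Proof.
pose f := fun p : 'I_n * 'I_n => (p.1, p.2, p.1, p.2) : quad.
have inj : injective f by case=> a b [c d] [-> ->].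
apply: (@leq_trans #|f @: [set: 'I_n * 'I_n]|).
  by rewrite card_imset // cardsT; apply: eq_leq; rewrite -mxvec_cast.
apply: subset_leq_card; apply/subsetP => q /imsetP [[a b] _ ->].
by rewrite inE /diag_quad /= !eqxx.
Qed.

Lemma card_swap_quads : n * n - n <= #|[set q | swap_quad q]|.
Proof.
pose D := [set p : 'I_n * 'I_n | p.1 != p.2].
have card_D : n * n - n <= #|D|.
  rewrite cardsCs -mxvec_cast leq_sub2l //.
  apply: (@leq_trans #|(fun x : 'I_n => (x, x)) @: [set: 'I_n]|).
    apply: subset_leq_card; apply/subsetP => [[a b]]; rewrite !inE negbK /= => /eqP ->.
    by apply/imsetP; exists b; rewrite ?inE.
  by apply: leq_trans (leq_imset_card _ _) _; rewrite cardsT card_ord.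
pose f := fun p : 'I_n * 'I_n => (p.1, p.2, p.2, p.1) : quad.
have inj : injective f by case=> a b [c d] [-> ->].
apply: (leq_trans card_D); rewrite -(card_imset _ inj).
apply: subset_leq_card; apply/subsetP => q /imsetP [[a b] ab ->].
by rewrite inE /= in ab; rewrite inE /swap_quad /qx /qy /qz /qw /= !eqxx ab.
Qed.

Definition excess := (#|ap_quads_at| + #|ap_quads_off|
  + (#|proper_quads_x| + #|proper_quads_z| + #|proper_quads_avoid|)).

Lemma energy_excess : n * n + (n * n - n) + excess <= energy A.
Proof.
rewrite energy_sum /excess addnA.
have ap_split : (#|ap_quads_at| + #|ap_quads_off| = \sum_q ap_quad q).
  by rewrite !card_quads_sum -big_split; apply: eq_bigr => q _; apply: ap_quad_split.
have proper_split : (#|proper_quads_x| + #|proper_quads_z| + #|proper_quads_avoid|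
                     <= \sum_q proper_quad q).
  by rewrite !card_quads_sum -!big_split; apply: leq_sum => q _; apply: proper_quad_split_le.
rewrite ap_split; apply: leq_trans (leq_add (leq_add (leq_add card_diag_quads
  card_swap_quads) (leqnn _)) proper_split) _.
rewrite !card_quads_sum -!big_split /=; apply: leq_sum => q _; exact: quad_classes_le.
Qed.

Lemma card_le_inj k (T : {set k.-tuple 'I_n}) (Q : {set quad}) (phi : k.-tuple 'I_n -> quad) :
  (forall v, v \in T -> phi v \in Q) -> {in T &, injective phi} -> #|T| <= #|Q|.
Proof.
move=> phiTQ inj; rewrite -(card_in_imset inj); apply: subset_leq_card.
by apply/subsetP => q /imsetP [v vT ->]; apply: phiTQ.
Qed.

Lemma tuple_eq_entries k (v v' : k.-tuple 'I_n) :
  (forall i, i < k -> entry v i = entry v' i) -> v = v'.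
Proof.
move=> vv'; apply: val_inj; apply: (@eq_from_nth _ ord0); first by rewrite !size_tuple.
by move=> i; rewrite size_tuple; apply: vv'.
Qed.

Lemma entry_neq k (v : k.-tuple 'I_n) i j :
  uniq v -> i < k -> j < k -> i != j -> entry v i != entry v j.
Proof. by move=> Uv i_lt j_lt; rewrite /entry nth_uniq ?size_tuple. Qed.

Ltac uniq_entries Uv :=
  rewrite /= ?inE ?negb_or ?andbT; repeat (apply/andP; split); by apply: (entry_neq Uv).

Ltac inj_entries :=
  move=> v v' /[!inE] /andP [/andP [/eqP v0 _] _] /andP [/andP [/eqP v'0 _] _] [] *;
  apply: tuple_eq_entries; case=> [|[|[|[|[|?]]]]] //; congruence.

Ltac gap_match_quad :=
  move=> v /[!inE]; rewrite /gap_match /ap_quad /proper_quad /additive /qx /qy /qz /qw /=;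
  case/andP => /andP [/eqP v0 /eqP gap_eq] Uv.

Lemma card_matches01_pos : #|gap_matches 3 0 1 1 2 true| <= #|ap_quads_at|.
Proof.
apply: (@card_le_inj _ _ _ (fun v => (entry v 1, entry v 1, entry v 0, entry v 2)));
  last by inj_entries.
gap_match_quad; apply/andP; split; last by rewrite v0.
by rewrite eqxx /=; apply/andP; split; [uniq_entries Uv | apply/eqP; lra].
Qed.

Lemma card_matches01_neg : #|gap_matches 3 0 1 1 2 false| = 0.
Proof.
apply/eqP; rewrite cards_eq0; apply/eqP/setP => v; rewrite !inE /gap_match /=.
apply/negbTE/negP => /andP [/andP [_ /eqP gap_eq] Uv].
have : elt (entry v 0) = elt (entry v 2) by lra.
by move/elt_inj/eqP; apply/negP; apply: (entry_neq Uv).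
Qed.

Lemma card_matches0f_pos : #|gap_matches 4 0 1 2 3 true| <= #|proper_quads_z|.
Proof.
apply: (@card_le_inj _ _ _ (fun v => (entry v 1, entry v 2, entry v 0, entry v 3)));
  last by inj_entries.
gap_match_quad; apply/andP; split; last by rewrite v0.
by apply/andP; split; [uniq_entries Uv | apply/eqP; lra].
Qed.

Lemma card_matches0f_neg : #|gap_matches 4 0 1 2 3 false| <= #|proper_quads_x|.
Proof.
apply: (@card_le_inj _ _ _ (fun v => (entry v 0, entry v 2, entry v 1, entry v 3)));
  last by inj_entries.
gap_match_quad; apply/andP; split; last by rewrite v0.
by apply/andP; split; [uniq_entries Uv | apply/eqP; lra].
Qed.

Lemma card_matches_adjacent_pos : #|gap_matches 4 1 2 2 3 true| <= #|ap_quads_off|.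
Proof.
apply: (@card_le_inj _ _ _ (fun v => (entry v 2, entry v 2, entry v 1, entry v 3)));
  last by inj_entries.
gap_match_quad; apply/andP; split; last by rewrite -v0; apply: (entry_neq Uv).
by rewrite eqxx /=; apply/andP; split; [uniq_entries Uv | apply/eqP; lra].
Qed.

Lemma card_matches_adjacent_neg : #|gap_matches 4 1 2 2 3 false| = 0.
Proof.
apply/eqP; rewrite cards_eq0; apply/eqP/setP => v; rewrite !inE /gap_match /=.
apply/negbTE/negP => /andP [/andP [_ /eqP gap_eq] Uv].
have : elt (entry v 1) = elt (entry v 3) by lra.
by move/elt_inj/eqP; apply/negP; apply: (entry_neq Uv).
Qed.

Lemma card_matches_apart_pos : #|gap_matches 5 1 2 3 4 true| <= #|proper_quads_avoid|.
Proof.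
apply: (@card_le_inj _ _ _ (fun v => (entry v 2, entry v 3, entry v 1, entry v 4)));
  last by inj_entries.
gap_match_quad; apply/andP; split; last by rewrite -v0; uniq_entries Uv.
by apply/andP; split; [uniq_entries Uv | apply/eqP; lra].
Qed.

Lemma card_matches_apart_neg : #|gap_matches 5 1 2 3 4 false| <= #|proper_quads_avoid|.
Proof.
apply: (@card_le_inj _ _ _ (fun v => (entry v 2, entry v 4, entry v 1, entry v 3)));
  last by inj_entries.
gap_match_quad; apply/andP; split; last by rewrite -v0; uniq_entries Uv.
by apply/andP; split; [uniq_entries Uv | apply/eqP; lra].
Qed.

Lemma weighted_matches_le_excess :
  2 * #|gap_matches 3 0 1 1 2 true|
  + 2 * (#|gap_matches 4 0 1 2 3 true| + #|gap_matches 4 0 1 2 3 false|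
         + #|gap_matches 4 1 2 2 3 true|)
  + (#|gap_matches 5 1 2 3 4 true| + #|gap_matches 5 1 2 3 4 false|) <= 2 * excess.
Proof.
have := card_matches01_pos; have := card_matches0f_pos; have := card_matches0f_neg.
have := card_matches_adjacent_pos; have := card_matches_apart_pos.
have := card_matches_apart_neg; rewrite /excess; lia.
Qed.

Lemma equal_gaps_sum_le : 4 <= N ->
  \sum_(0 <= f < N) \sum_(0 <= e < f) equal_gaps_count e f <= (N - 2)`! * excess.
Proof.
move=> N_ge4; have N_ge2 : 2 <= N by lia.
have := @sum_lt_pairs_le N equal_gaps_count _ _ _ _ N_ge2 (equal_gaps_count01 N_ge2)
  (@equal_gaps_count0f) (@equal_gaps_count_adjacent) (@equal_gaps_count_apart).
rewrite card_matches01_neg card_matches_adjacent_neg !addn0.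
have fact_N2 : (N - 2)`! = (N - 2) * (N - 3)`!.
  have N2_gt0 : 0 < N - 2 by lia.
  by rewrite (fact_pred N2_gt0) -subnDA.
have bin_N2 : 'C(N - 2, 2) * (N - 4)`! * 2 = (N - 2)`!.
  have N2_ge2 : 2 <= N - 2 by lia.
  rewrite -(bin_fact N2_ge2) (_ : N - 2 - 2 = N - 4); last by lia.
  by rewrite mulnAC -mulnA.
move: weighted_matches_le_excess fact_N2 bin_N2.
move: (\sum_(_ <= _ < _) _) (N - 2)`! (N - 3)`! (N - 4)`! 'C(N - 2, 2) excess.
move=> S F2 F3 F4 C X; move: (N - 2) #|gap_matches 3 0 1 1 2 true| => M TA.
move: #|gap_matches 4 0 1 2 3 true| #|gap_matches 4 0 1 2 3 false| => TB TB'.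
move: #|gap_matches 4 1 2 2 3 true| => TC.
move: #|gap_matches 5 1 2 3 4 true| #|gap_matches 5 1 2 3 4 false| => TD TD'.
move=> weighted_le F2E CE S_le.
rewrite -(leq_pmul2l (isT : 0 < 2)) mulnCA; apply: leq_trans (leq_mul (leqnn 2) S_le) _.
apply: leq_trans (leq_mul (leqnn F2) weighted_le); apply: eq_leq.
have -> : M * ((TB + TB') * F3 + TC * F3) = (TB + TB' + TC) * F2 by rewrite F2E; ring.
rewrite mulnDr (_ : 2 * (C * ((TD + TD') * F4)) = (TD + TD') * F2); last by rewrite -CE; ring.
ring.
Qed.

Lemma distinct_gap_path_large : 7 <= N -> 2 * energy A < 5 * n ^ 2 ->
  distinct_gap_path A (elt k0).
Proof.
move=> N_ge7 energy_lt.
pose good := [pred s : 'S_n | (s ord0 == k0) && [forall e : 'I_N, forall f : 'I_N,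
  (e < f) ==> (perm_gap s e != perm_gap s f)]].
have [s /andP [/eqP s0 /forallP s_good] | no_good] := pickP good.
  apply: (distinct_gap_path_of_perm s0) => e f ef f_lt.
  have /forallP /(_ (Ordinal f_lt)) := s_good (Ordinal (ltn_trans ef f_lt)).
  by rewrite /= ef.
have : N`! <= (N - 2)`! * excess.
  apply: leq_trans (equal_gaps_sum_le _); last by lia.
  apply: fact_le_equal_gaps_sum => s s0; move: (no_good s); rewrite /= s0 eqxx /=.
  case/negbT/forallPn => e /forallPn [f]; rewrite negb_imply negbK => /andP [ef /eqP eq_gaps].
  by exists e, f.
have -> : N`! = N * (N - 1) * (N - 2)`!.
  by rewrite (@fact_pred N) ?(@fact_pred (N - 1)) -?subnDA ?mulnA //; lia.
rewrite mulnC leq_pmul2l ?fact_gt0 // => excess_ge.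
by have := energy_excess; nia.
Qed.
End LargeSets.

(** * Sets with at most seven elements *)

Local Open Scope ring_scope.

Ltac chain_lt :=
  first [ assumption
        | match goal with h : is_true (?x < ?y) |- is_true (?x < ?z) =>
            apply: (lt_trans h); chain_lt end ].

Ltac drop_norms :=
  repeat match goal with |- context [ `|?x - ?y| ] =>
    first [ rewrite (@dist_gt _ x y); last by chain_lt
          | rewrite (@dist_lt _ x y); last by chain_lt ] end.

Ltac nested_lt :=
  let weak := first [ exact: lexx | apply: ltW; chain_lt ] in
  first [ apply: ltr_leB; [chain_lt | weak] | apply: ler_ltB; [weak | chain_lt] ].

Ltac gap_neq :=
  first [ apply/negbT/lt_eqF; nested_lt | apply/negbT/gt_eqF; nested_lt | apply/eqP => ?; lra ].

(* [tour [:: i; j; ...]] proves [distinct_gap_path bs b_i] with the ordering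
   [b_i, b_j, ...] of the sorted [bs]: gaps spanning nested index intervals are
   compared by monotonicity, the others are separated by [lra] from the case
   hypotheses in the context. *)
Ltac tour l := match l with (?i :: ?idx)%SEQ =>
  apply: (@distinct_gap_path_nth _ _ i idx); first by [];
  rewrite /gaps /=; drop_norms;
  rewrite /= ?inE ?negb_or ?andbT //; repeat (apply/andP; split); gap_neq end.

Ltac intro_chain := move=> /=; repeat (case/andP=> ?); move=> _.

Section SmallSortedSets.
Variable R : realDomainType.

(* Each split [eqVneq u v] guards an ordering whose gaps are distinct as long as
   [u != v]. *)

Lemma distinct_gap_path_sorted5_at3 (b0 b1 b2 b3 b4 : R) :
  sorted <%R [:: b0; b1; b2; b3; b4] -> distinct_gap_path [:: b0; b1; b2; b3; b4] b3.
Proof.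
intro_chain; have [E1|E1] := eqVneq (b1 - b0) (b4 - b3); last by tour [:: 3; 0; 4; 1; 2]%N.
have [E2|E2] := eqVneq (b4 - b2) (b2 - b1).
- by tour [:: 3; 1; 0; 4; 2]%N.
- by tour [:: 3; 0; 4; 2; 1]%N.
Qed.

Lemma distinct_gap_path_sorted6_at4 (b0 b1 b2 b3 b4 b5 : R) :
  sorted <%R [:: b0; b1; b2; b3; b4; b5] -> distinct_gap_path [:: b0; b1; b2; b3; b4; b5] b4.
Proof.
intro_chain; have [E1|E1] := eqVneq (b1 - b0) (b5 - b4); last by tour [:: 4; 0; 5; 1; 3; 2]%N.
have [E2|E2] := eqVneq (b5 - b3) (b2 - b1).
- by tour [:: 4; 2; 3; 0; 5; 1]%N.
- by tour [:: 4; 0; 5; 2; 3; 1]%N.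
Qed.

Lemma distinct_gap_path_sorted7_at4 (b0 b1 b2 b3 b4 b5 b6 : R) :
  sorted <%R [:: b0; b1; b2; b3; b4; b5; b6] ->
  distinct_gap_path [:: b0; b1; b2; b3; b4; b5; b6] b4.
Proof.
intro_chain; have [E1|E1] := eqVneq (b4 - b3) (b2 - b1); last by tour [:: 4; 2; 3; 1; 5; 0; 6]%N.
have [E2|E2] := eqVneq (b2 - b1) (b5 - b4); last by tour [:: 4; 1; 3; 2; 5; 0; 6]%N.
have [E3|E3] := eqVneq (b1 - b0) (b6 - b4).
- by tour [:: 4; 0; 5; 3; 6; 2; 1]%N.
- by tour [:: 4; 0; 6; 1; 2; 5; 3]%N.
Qed.

Lemma distinct_gap_path_sorted7_at5 (b0 b1 b2 b3 b4 b5 b6 : R) :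
  sorted <%R [:: b0; b1; b2; b3; b4; b5; b6] ->
  distinct_gap_path [:: b0; b1; b2; b3; b4; b5; b6] b5.
Proof.
intro_chain; have [E1|E1] := eqVneq (b1 - b0) (b6 - b5); last by tour [:: 5; 0; 6; 1; 4; 2; 3]%N.
have [E2|E2] := eqVneq (b5 - b4) (b1 - b0); last by tour [:: 5; 1; 6; 0; 4; 2; 3]%N.
have [E3|E3] := eqVneq (b2 - b0) (b4 - b3).
- by tour [:: 5; 2; 1; 6; 0; 3; 4]%N.
- by tour [:: 5; 1; 6; 0; 3; 2; 4]%N.
Qed.

Lemma distinct_gap_path_sorted_upper (bs : seq R) (k : nat) :
  sorted <%R bs -> (size bs <= 7)%N -> (k < size bs)%N -> ((size bs).-1 <= k.*2)%N ->
  distinct_gap_path bs (nth 0 bs k).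
Proof.
case: bs => [|b0 [|b1 [|b2 [|b3 [|b4 [|b5 [|b6 [|]]]]]]]] // sorted_bs _;
  have := sorted_bs; intro_chain; case: k => [|[|[|[|[|[|[|k]]]]]]] //= _ _.
- by tour [:: 0]%N.
- by tour [:: 1; 0]%N.
- by tour [:: 1; 0; 2]%N.
- by tour [:: 2; 0; 1]%N.
- by tour [:: 2; 1; 3; 0]%N.
- by tour [:: 3; 0; 2; 1]%N.
- by tour [:: 2; 1; 3; 0; 4]%N.
- exact: distinct_gap_path_sorted5_at3.
- by tour [:: 4; 0; 3; 1; 2]%N.
- by tour [:: 3; 2; 4; 1; 5; 0]%N.
- exact: distinct_gap_path_sorted6_at4.
- by tour [:: 5; 0; 4; 1; 3; 2]%N.
- by tour [:: 3; 2; 4; 1; 5; 0; 6]%N.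
- exact: distinct_gap_path_sorted7_at4.
- exact: distinct_gap_path_sorted7_at5.
- by tour [:: 6; 0; 5; 1; 4; 2; 3]%N.
Qed.
End SmallSortedSets.

Lemma distinct_gap_path_mirror (R : numDomainType) (A : seq R) (a : R) :
  distinct_gap_path (map -%R (rev A)) (- a) -> distinct_gap_path A a.
Proof.
move=> /distinct_gap_path_opp; rewrite -map_comp opprK (eq_map (@opprK _)) map_id.
by apply: distinct_gap_path_perm; rewrite perm_rev.
Qed.

Lemma distinct_gap_path_sorted_small (R : realDomainType) (bs : seq R) :
  sorted <%R bs -> (size bs <= 7)%N -> {in bs, forall a, distinct_gap_path bs a}.
Proof.
move=> sorted_bs size_bs a /(nthP 0) [k k_lt <-].
have [k_up|k_low] := leqP (size bs).-1 k.*2.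
  exact: distinct_gap_path_sorted_upper.
rewrite -muln2 in k_low; apply: distinct_gap_path_mirror.
have sorted_bs' : sorted <%R (map -%R (rev bs)).
  by rewrite sorted_map rev_sorted (eq_sorted (e' := <%R)) // => x y /=; rewrite ltrN2.
have k'_lt : ((size bs).-1 - k < size bs)%N by lia.
rewrite -[k in nth 0 bs k](_ : size bs - ((size bs).-1 - k).+1 = k)%N; last by lia.
rewrite -nth_rev // -(nth_map 0 0 -%R) ?size_rev //.
apply: distinct_gap_path_sorted_upper; rewrite ?size_map ?size_rev -?muln2 //.
by move: k_low; move: (size bs).-1 => m; lia.
Qed.

Lemma distinct_gap_path_small (R : realDomainType) (A : seq R) :
  uniq A -> (size A <= 7)%N -> {in A, forall a, distinct_gap_path A a}.
Proof.
move=> uniq_A size_A a a_A; apply: (distinct_gap_path_perm (permEl (perm_sort <=%O A))).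
by apply: distinct_gap_path_sorted_small; rewrite ?sort_lt_sorted ?size_sort ?mem_sort.
Qed.

Theorem theorem2 (R : realType) (A : seq R) :
  uniq A ->
  ((energy A)%:R : R) < (5%:R / 2%:R) * ((size A) ^ 2)%:R ->
  forall a : R, a \in A ->
    exists t : seq R,
      perm_eq (a :: t) A /\ uniq (gaps a t).
Proof.
move=> uniq_A energy_lt a a_A; suff good : distinct_gap_path A a by exact: good.
have [size_le|size_gt] := leqP (size A) 7; first exact: distinct_gap_path_small.
have {}energy_lt : (2 * energy A < 5 * size A ^ 2)%N.
  by rewrite -(ltr_nat R) !natrM; lra.
have [N size_A] : exists N, size A = N.+1 by exists (size A).-1; rewrite prednK //; lia.
have k_lt : (index a A < N.+1)%N by rewrite -size_A index_mem.
rewrite -(nth_index 0 a_A) -[index a A]/(val (Ordinal k_lt)).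
apply: (distinct_gap_path_large uniq_A size_A); first lia.
by rewrite -size_A.
Qed.
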